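(* Let $n,k$ be integers with $2\le k\le n-1$, let $\varepsilon,\delta>0$, and let $$m:=\frac{12n(n-1)^2}{\varepsilon^2(n-k)^2k}\ln\frac{2n^2}{\delta}.$$ Let $\mathcal{I}=(I_1,\dots,I_m)$ be a sequence of random $k$-element subsets of $[n]=\{1,\dots,n\}$, sampled independently and uniformly from all $k$-element subsets of $[n]$, and define $$\mathcal{S}_{\mathcal{I}}:=\{M\in\mathbb{R}^{n\times n}: M_{I_i}\succeq 0 \text{ for all } i\in[m]\}.$$ Then with probability at least $1-\delta$, $$\overline{\mathrm{dist}}_F(\mathcal{S}_{\mathcal{I}},\mathcal{S}^n_+)\le (1+\varepsilon)\frac{n-k}{n+k-2}.$$
   Context: For $M\in\mathbb{R}^{n\times n}$ and $J\subseteq[n]$, $M_J$ is the principal submatrix of $M$ with rows and columns indexed by $J$; $A\succeq 0$ means $A$ is a real symmetric positive semidefinite (PSD) matrix. $\mathcal{S}^n_+$ denotes the cone of $n\times n$ real symmetric PSD matrices. For a matrix $M$, $\mathrm{dist}_F(M,\mathcal{S}^n_+)=\inf_{N\in\mathcal{S}^n_+}\|M-N\|_F$, where $\|\cdot\|_F$ is the Frobenius norm. For a set $\mathcal{K}$ of $n\times n$ matrices, $\overline{\mathrm{dist}}_F(\mathcal{K},\mathcal{S}^n_+)=\sup_{M\in\mathcal{K},\ \|M\|_F=1}\mathrm{dist}_F(M,\mathcal{S}^n_+)$. *)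

From HB Require Import structures.
From mathcomp Require Import all_boot all_order all_algebra.
From mathcomp Require Import all_classical all_reals all_analysis.
Set Implicit Arguments. Unset Strict Implicit. Unset Printing Implicit Defensive.
Import Order.TTheory GRing.Theory Num.Theory.
Local Open Scope ring_scope.
Local Open Scope classical_set_scope.

Section Defs.
Variable R : realType.

Definition principal_submx (n : nat) (M : 'M[R]_n) (J : {set 'I_n}) : 'M[R]_#|J| :=
  \matrix_(i < #|J|, j < #|J|) M (enum_val i) (enum_val j).

Definition psd (p : nat) (A : 'M[R]_p) : Prop :=
  A^T = A /\ forall x : 'cV[R]_p, 0 <= (x^T *m A *m x) 0 0.

Definition frob_norm (p : nat) (A : 'M[R]_p) : R :=
  Num.sqrt (\sum_(i < p) \sum_(j < p) A i j ^+ 2).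

Definition dist_psd (p : nat) (M : 'M[R]_p) : R :=
  inf [set frob_norm (M - N) | N in [set N : 'M[R]_p | psd N]].

Definition dist_bar_psd (p : nat) (K : set 'M[R]_p) : R :=
  sup [set dist_psd M | M in [set M | K M /\ frob_norm M = 1]].

Definition S_of (n m : nat) (I : {ffun 'I_m -> {set 'I_n}}) : set 'M[R]_n :=
  [set M | forall i : 'I_m, psd (principal_submx M (I i))].

Definition ksubset_tuples (n m k : nat) : {set {ffun 'I_m -> {set 'I_n}}} :=
  [set I : {ffun 'I_m -> {set 'I_n}} | [forall i : 'I_m, #|I i| == k]].

(* probability of an event under the uniform (independent) distribution *)
Definition prob_tuples (n m k : nat) (E : {ffun 'I_m -> {set 'I_n}} -> Prop) : R :=
  #|[set I in ksubset_tuples n m k | `[< E I >] ]|%:R / #|ksubset_tuples n m k|%:R.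

End Defs.

(* For M in S_I with ||M||_F = 1, the matrix N = s * sum_i M|_{I_i} (M restricted to
   I_i x I_i, zero elsewhere) is PSD, and N_ab = s * X_ab * M_ab where X_ab counts the
   i with a, b in I_i; hence dist_F(M, S^n_+) <= max_ab |1 - s X_ab|.  Each X_ab is
   binomial, with mean m k / n on the diagonal and m k (k - 1) / (n (n - 1)) off it, and
   for s = (1 + q) n / (m k), q = (n - k) / (n + k - 2), one gets |1 - s E X_ab| = q for
   every pair.  Multiplicative Chernoff bounds, with relative deviations tuned so that
   s |X_ab - E X_ab| <= eps q, and a union bound over the n^2 pairs show that this
   happens for all pairs simultaneously with probability at least 1 - delta. *)

From HB Require Import structures.
From mathcomp Require Import all_boot all_order all_algebra.
From mathcomp Require Import all_classical all_reals all_analysis.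
From mathcomp.algebra_tactics Require Import ring lra.
From mathcomp Require Import zify.
Import Order.TTheory GRing.Theory Num.Theory numFieldNormedType.Exports.
Local Open Scope ring_scope.
Set Implicit Arguments. Unset Strict Implicit. Unset Printing Implicit Defensive.

Section ChernoffRates.
Variable R : realType.
Local Open Scope classical_set_scope.

Lemma ger0_is_derive_le (f df : R -> R) (v : R) : 0 <= v ->
  (forall x, is_derive x (1 : R) f (df x)) -> (forall x, 0 < x -> 0 <= df x) -> f 0 <= f v.
Proof.
move=> v0 fdf df0; have [->|vn0] := eqVneq v 0; first by [].
have vp : 0 < v by rewrite lt_def vn0.
have fc : {within `[0, v], continuous f}.
  by apply: derivable_within_continuous => x _; exact: ex_derive.
have [c /[!in_itv] /= /andP[c0 _] fvE] := MVT vp (fun x _ => fdf x) fc.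
by rewrite -subr_ge0 fvE subr0 mulr_ge0 ?df0 ?ltW.
Qed.

Lemma expR_sub_expRN_ge2x (v : R) : 0 <= v -> 2 * v <= expR v - expR (- v).
Proof.
move=> v0; rewrite -subr_ge0.
have := @ger0_is_derive_le (fun y => expR y - expR (- y) - 2 * y)
  (fun x => expR x + expR (- x) - 2) v v0.
rewrite oppr0 expR0 mulr0 !subr0 subrr; apply=> [x|x x0].
  by apply: is_derive_eq; rewrite mulrN1 opprK; congr (_ - _); exact: mulr1.
(* e^x + e^-x - 2 = (e^x - 1)(1 - e^-x) as e^x e^-x = 1 *)
have : 0 <= (expR x - 1) * (1 - expR (- x)).
  by apply: mulr_ge0; rewrite subr_ge0 ?expR_le1 ?oppr_le0 -?expR0 ?ler_expR ltW.
by rewrite mulrBl mulrBr mulrBr expRxMexpNx_1 !mul1r mulr1; lra.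
Qed.

Lemma expR_1Bx_le_expRN_1Dx (v : R) : 0 <= v -> expR v * (1 - v) <= expR (- v) * (1 + v).
Proof.
move=> v0; rewrite -subr_ge0.
have := @ger0_is_derive_le (fun y => expR (- y) * (1 + y) - expR y * (1 - y))
  (fun x => x * (expR x - expR (- x))) v v0.
rewrite oppr0 expR0 addr0 mulr1 subrr; apply=> [x|x x0].
  by apply: is_derive_eq; rewrite /GRing.scale /=; ring.
by rewrite mulr_ge0 ?(ltW x0) // subr_ge0 ler_expR ge0_cp // ltW.
Qed.

Lemma chernoff_upper_rate (e : R) :
  0 <= e <= 1 -> e - (1 + e) * ln (1 + e) <= - (e ^+ 2 / 3).
Proof.
move=> /andP[e0 e1]; have e2 : 0 < 2 + e by lra.
(* for y = e / (2 + e), expR_1Bx_le_expRN_1Dx reads exp (2 y) <= 1 + e *)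
pose y := e / (2 + e).
have y0 : 0 <= y by rewrite divr_ge0 // ltW.
have := expR_1Bx_le_expRN_1Dx y0.
have -> : 1 - y = 2 / (2 + e) by rewrite /y; field; lra.
have -> : 1 + y = (2 + 2 * e) / (2 + e) by rewrite /y; field; lra.
rewrite !mulrA ler_pM2r ?invr_gt0 // => /(ler_wpM2l (expR_ge0 y)).
rewrite mulrA (mulrA (expR y)) expRxMexpNx_1 mul1r -expRD => exp2y.
have : y + y <= ln (1 + e).
  by rewrite -[X in X <= _]expRK ler_ln ?posrE ?expR_gt0 //; lra.
have : (y + y) * (2 + e) = 2 * e by rewrite /y; field; lra.
nra.
Qed.

Lemma chernoff_lower_rate (e : R) :
  0 <= e < 1 -> - e - (1 - e) * ln (1 - e) <= - (e ^+ 2 / 3).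
Proof.
move=> /andP[e0 e1]; have e1p : 0 < 1 - e by lra.
(* for v = - ln (1 - e), expR_sub_expRN_ge2x reads 2 v (1 - e) <= 1 - (1 - e)^2 *)
pose v := - ln (1 - e).
have v0 : 0 <= v by rewrite oppr_ge0 ln_le0 //; lra.
have := expR_sub_expRN_ge2x v0.
rewrite {2}/v opprK lnK ?posrE // -[v]opprK expRN {1}/v opprK lnK ?posrE //.
move=> /(ler_wpM2l (ltW e1p)); rewrite mulrBr mulfV ?gt_eqF // -expr2 /v.
nra.
Qed.

End ChernoffRates.

Lemma natr_card_setIdE (R : realType) (U : finType) (S : {set U}) (P : pred U) :
  #|[set x in S | P x]|%:R = \sum_(x in S) (P x)%:R :> R.
Proof.
rewrite -sum1_card natr_sum [RHS]big_mkcond [LHS]big_mkcond; apply: eq_bigr => x _.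
by rewrite inE; case: (x \in S); case: (P x).
Qed.

Section Chernoff.
Variables (R : realType) (U : finType) (S : {set U}) (P : pred U) (m : nat).

Definition tuples_on : {set {ffun 'I_m -> U}} :=
  [set I : {ffun 'I_m -> U} | [forall i, I i \in S]].

Definition hits (I : {ffun 'I_m -> U}) : nat := #|[set i | P (I i)]|.

Definition hit_prob : R := #|[set x in S | P x]|%:R / #|S|%:R.

Definition hits_mean : R := m%:R * hit_prob.

Lemma sum_tuples_on_prod (w : U -> R) :
  \sum_(I in tuples_on) \prod_(i < m) w (I i) = (\sum_(x in S) w x) ^+ m.
Proof.
rewrite -[m in RHS]card_ord -prodr_const bigA_distr_big; apply: eq_bigl => I.
by rewrite inE; apply/forallP/ffun_onP.
Qed.

Lemma card_tuples_on : #|tuples_on| = (#|S| ^ m)%N.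
Proof.
rewrite -[m in RHS]card_ord -card_ffun_on; apply: eq_card => I.
by rewrite inE; apply/forallP/ffun_onP.
Qed.

Lemma sum_tuples_on_expR_hits (l : R) :
  \sum_(I in tuples_on) expR (l * (hits I)%:R)
  = (#|S|%:R + (expR l - 1) * #|[set x in S | P x]|%:R) ^+ m.
Proof.
have -> : #|S|%:R + (expR l - 1) * #|[set x in S | P x]|%:R
    = \sum_(x in S) expR (l * (P x)%:R).
  rewrite natr_card_setIdE mulr_sumr -sumr_const -big_split; apply: eq_bigr => x _ /=.
  by case: (P x); rewrite ?mulr1 ?mulr0 ?expR0 ?addr0 // addrC subrK.
rewrite -sum_tuples_on_prod; apply: eq_bigr => I _.
rewrite /hits -sum1_card natr_sum mulr_sumr expR_sum [LHS]big_mkcond /=.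
by apply: eq_bigr => i _; rewrite inE; case: (P (I i)); rewrite ?mulr0 ?expR0.
Qed.

Lemma chernoff_bound (Q : pred {ffun 'I_m -> U}) (l a : R) :
  (0 < #|S|)%N -> (forall I, Q I -> l * a <= l * (hits I)%:R) ->
  #|[set I in tuples_on | Q I]|%:R
    <= #|tuples_on|%:R * expR (hits_mean * (expR l - 1) - l * a).
Proof.
move=> S0 Qa; have S0r : 0 < #|S|%:R :> R by rewrite ltr0n.
have p0 : 0 <= hit_prob by rewrite divr_ge0.
have markov : #|[set I in tuples_on | Q I]|%:R * expR (l * a)
    <= (#|S|%:R * (1 + hit_prob * (expR l - 1))) ^+ m.
  have -> : #|S|%:R * (1 + hit_prob * (expR l - 1))
      = #|S|%:R + (expR l - 1) * #|[set x in S | P x]|%:R.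
    by rewrite /hit_prob; field; rewrite gt_eqF.
  rewrite -sum_tuples_on_expR_hits natr_card_setIdE mulr_suml; apply: ler_sum => I _.
  by case: (boolP (Q I)) => QI; rewrite ?mul1r ?mul0r ?expR_ge0 ?ler_expR ?Qa.
rewrite card_tuples_on natrX expRD expRN mulrA ler_pdivlMr ?expR_gt0 //; apply: le_trans markov _.
rewrite exprMn ler_wpM2l ?exprn_ge0 // /hits_mean -mulrA expRM_natl.
rewrite lerXn2r ?nnegrE ?expR_ge0 ?expR_ge1Dx //.
have p1 : hit_prob <= 1.
  rewrite ler_pdivrMr // mul1r ler_nat subset_leq_card //.
  by apply/fintype.subsetP => x; rewrite inE => /andP[].
have := expR_gt0 l; nra.
Qed.

Lemma hits_mean_ge0 : 0 <= hits_mean.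
Proof. by rewrite mulr_ge0 ?divr_ge0. Qed.

Lemma card_hits_ge (e : R) : 0 <= e <= 1 -> (0 < #|S|)%N ->
  #|[set I in tuples_on | (1 + e) * hits_mean <= (hits I)%:R]|%:R
    <= #|tuples_on|%:R * expR (- (hits_mean * (e ^+ 2 / 3))).
Proof.
move=> /andP[e0 e1] S0; have ln0 : 0 <= ln (1 + e) by rewrite ln_ge0 //; lra.
apply: le_trans (chernoff_bound (l := ln (1 + e)) S0 _) _ => [I /= |].
  exact: ler_wpM2l.
rewrite ler_wpM2l // ler_expR lnK ?posrE; last lra.
have := ler_wpM2l hits_mean_ge0 (chernoff_upper_rate (e := e) _).
by rewrite e0 e1 => /(_ isT); lra.
Qed.

Lemma card_hits_le (e : R) : 0 <= e < 1 -> (0 < #|S|)%N ->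
  #|[set I in tuples_on | (hits I)%:R <= (1 - e) * hits_mean]|%:R
    <= #|tuples_on|%:R * expR (- (hits_mean * (e ^+ 2 / 3))).
Proof.
move=> /andP[e0 e1] S0; have ln0 : ln (1 - e) <= 0 by rewrite ln_le0 //; lra.
apply: le_trans (chernoff_bound (l := ln (1 - e)) S0 _) _ => [I /= |].
  exact: ler_wnM2l.
rewrite ler_wpM2l // ler_expR lnK ?posrE; last lra.
have := ler_wpM2l hits_mean_ge0 (chernoff_lower_rate (e := e) _).
by rewrite e0 e1 => /(_ isT); lra.
Qed.

Lemma card_hits_deviation (e : R) : 0 <= e < 1 -> (0 < #|S|)%N ->
  #|[set I in tuples_on | e * hits_mean < `|(hits I)%:R - hits_mean|]|%:R
    <= 2 * #|tuples_on|%:R * expR (- (hits_mean * (e ^+ 2 / 3))).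
Proof.
move=> /andP[e0 e1] S0.
have := lerD (card_hits_le (e := e) _ S0) (card_hits_ge (e := e) _ S0).
rewrite e0 e1 ltW // -mulrDl -mulr2n mulr_natl => /(_ isT isT); apply: le_trans.
rewrite -natrD ler_nat; apply: leq_trans (leq_card_setU _ _).
apply: subset_leq_card; apply/fintype.subsetP => I; rewrite !inE => /andP[-> /=].
rewrite ltNge ler_distl negb_and -!ltNge !mulrDl !mul1r mulNr.
by case/orP => /ltW ->; rewrite ?orbT.
Qed.

End Chernoff.

Section PsdDistance.
Variable R : realType.

Lemma quad_formE p (A : 'M[R]_p) (x : 'cV[R]_p) :
  (x^T *m A *m x) 0 0 = \sum_i \sum_j x i 0 * A i j * x j 0.
Proof.
rewrite mxE exchange_big; apply: eq_bigr => j _.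
by rewrite mxE big_distrl; apply: eq_bigr => i _; rewrite mxE.
Qed.

Lemma psd0 p : psd (0 : 'M[R]_p).
Proof. by split=> [|x]; rewrite ?trmx0 // mulmx0 mul0mx mxE. Qed.

Lemma psdD p (A B : 'M[R]_p) : psd A -> psd B -> psd (A + B).
Proof.
move=> [sA pA] [sB pB]; split; first by rewrite linearD /= sA sB.
by move=> x; rewrite mulmxDr mulmxDl mxE addr_ge0.
Qed.

Lemma psdZ p (s : R) (A : 'M[R]_p) : 0 <= s -> psd A -> psd (s *: A).
Proof.
move=> s0 [sA pA]; split; first by rewrite linearZ /= sA.
by move=> x; rewrite -scalemxAr -scalemxAl mxE mulr_ge0.
Qed.

Lemma psd_sum p (I : finType) (A : I -> 'M[R]_p) : (forall i, psd (A i)) -> psd (\sum_i A i).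
Proof. by move=> psdA; apply: big_ind => //; [exact: psd0 | exact: psdD]. Qed.

Definition restrict_mx n (M : 'M[R]_n) (J : {set 'I_n}) : 'M[R]_n :=
  \matrix_(i, j) if (i \in J) && (j \in J) then M i j else 0.

Lemma psd_restrict_mx n (M : 'M[R]_n) (J : {set 'I_n}) :
  psd (principal_submx M J) -> psd (restrict_mx M J).
Proof.
move=> [sym pos]; split.
  apply/matrixP => i j; rewrite !mxE.
  case: (boolP (i \in J)) => iJ; case: (boolP (j \in J)) => jJ //=.
  have /matrixP/(_ (enum_rank_in jJ j) (enum_rank_in iJ i)) := sym.
  by rewrite !mxE !enum_rankK_in.
move=> x; rewrite quad_formE.
have -> : \sum_i \sum_j x i 0 * restrict_mx M J i j * x j 0
    = \sum_(i in J) \sum_(j in J) x i 0 * M i j * x j 0.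
  rewrite [RHS]big_mkcond; apply: eq_bigr => i _.
  case: (boolP (i \in J)) => iJ /=; last first.
    by rewrite big1 // => j _; rewrite mxE (negbTE iJ) mulr0 mul0r.
  rewrite [RHS]big_mkcond; apply: eq_bigr => j _.
  by rewrite mxE iJ; case: (j \in J); rewrite ?mulr0 ?mul0r.
rewrite (big_enum_val (fun i => \sum_(j in J) x i 0 * M i j * x j 0)) /=.
under eq_bigr => i _ do
  rewrite (big_enum_val (fun j => x (enum_val i) 0 * M (enum_val i) j * x j 0)) /=.
set y : 'cV_#|J| := \col_a x (enum_val a) 0.
have -> : \sum_(i < #|J|) \sum_(j < #|J|)
      x (enum_val i) 0 * M (enum_val i) (enum_val j) * x (enum_val j) 0
    = (y^T *m principal_submx M J *m y) 0 0.
  by rewrite quad_formE; apply: eq_bigr => i _; apply: eq_bigr => j _; rewrite !mxE.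
exact: pos.
Qed.

Lemma frob_norm_ge0 p (A : 'M[R]_p) : 0 <= frob_norm A.
Proof. exact: sqrtr_ge0. Qed.

Lemma frob_norm_le_entrywise p (A M : 'M[R]_p) (B : R) : 0 <= B ->
  (forall i j, `|A i j| <= B * `|M i j|) -> frob_norm A <= B * frob_norm M.
Proof.
move=> B0 AM; rewrite /frob_norm -[B in B * _]ger0_norm // -sqrtr_sqr -sqrtrM ?sqr_ge0 //.
apply: ler_wsqrtr; rewrite mulr_sumr; apply: ler_sum => i _.
rewrite mulr_sumr; apply: ler_sum => j _.
rewrite -exprMn -(real_normK (num_real (A i j))) -(real_normK (num_real (B * M i j))).
by rewrite lerXn2r ?nnegrE ?normr_ge0 // normrM (ger0_norm B0) AM.
Qed.

Lemma dist_psd_le p (M N : 'M[R]_p) : psd N -> dist_psd M <= frob_norm (M - N).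
Proof.
move=> psdN; apply: ge_inf; last by exists N.
by exists 0 => _ [N' _ <-]; exact: frob_norm_ge0.
Qed.

Lemma dist_bar_psd_le p (K : set 'M[R]_p) (B : R) : 0 <= B ->
  (forall M, K M -> frob_norm M = 1 -> dist_psd M <= B) -> dist_bar_psd K <= B.
Proof.
move=> B0 KB; rewrite /dist_bar_psd.
set E := (X in sup X); have [->|/set0P ne] := eqVneq E set0; first by rewrite sup0.
by apply: ge_sup => // _ [M [KM M1] <-]; exact: KB.
Qed.

Lemma dist_bar_psd_le1 p (K : set 'M[R]_p) : dist_bar_psd K <= 1.
Proof.
apply: dist_bar_psd_le => // M _ M1.
by apply: le_trans (dist_psd_le M (psd0 p)) _; rewrite subr0 M1.
Qed.

Definition contains_pair n (a b : 'I_n) : pred {set 'I_n} := fun J => [set a; b] \subset J.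

Lemma contains_pairE n (a b : 'I_n) J : contains_pair a b J = (a \in J) && (b \in J).
Proof. by rewrite /contains_pair finset.subUset !finset.sub1set. Qed.

(* Given M in S_I, the PSD candidate is s times the sum of its restrictions to the I_i *)
Lemma dist_bar_psd_S_of_le n m (I : {ffun 'I_m -> {set 'I_n}}) (s B : R) :
  0 <= s -> 0 <= B ->
  (forall a b : 'I_n, `|1 - s * (hits (contains_pair a b) I)%:R| <= B) ->
  dist_bar_psd (S_of I) <= B.
Proof.
move=> s0 B0 hitsB; apply: dist_bar_psd_le => // M SM M1.
have psdN : psd (s *: \sum_i restrict_mx M (I i)).
  by apply/psdZ/psd_sum => // i; exact/psd_restrict_mx/SM.
apply: le_trans (dist_psd_le M psdN) _; rewrite -[B]mulr1 -M1.
apply: frob_norm_le_entrywise => // a b; rewrite !mxE summxE.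
have -> : \sum_k restrict_mx M (I k) a b = M a b * (hits (contains_pair a b) I)%:R.
  rewrite /hits -sum1_card natr_sum mulr_sumr [RHS]big_mkcond; apply: eq_bigr => i _.
  by rewrite mxE inE contains_pairE mulr1.
by rewrite mulrCA -{1}[M a b]mulr1 -mulrBr normrM mulrC ler_wpM2r.
Qed.

End PsdDistance.

Lemma bin_sub_ffact n k j : (j <= k <= n)%N -> ('C(n - j, n - k) * n ^_ j = 'C(n, k) * k ^_ j)%N.
Proof.
move=> /andP[jk kn]; have jn := leq_trans jk kn.
have Cnj : ('C(n - j, n - k) * ((n - k)`! * (k - j)`!) = (n - j)`!)%N.
  by rewrite -[(k - j)%N](_ : (n - j - (n - k) = k - j)%N) ?bin_fact //; lia.
have Cnk := bin_fact kn.
have ffn := ffact_fact jn; have ffk := ffact_fact jk.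
apply/eqP; rewrite -(@eqn_pmul2r ((n - k)`! * (k - j)`!)) ?muln_gt0 ?fact_gt0 //; apply/eqP.
transitivity n`!; first by rewrite -ffn -Cnj; ring.
by rewrite -Cnk -ffk; ring.
Qed.

Section KSubsets.
Variables (n k : nat).

Definition ksubsets : {set {set 'I_n}} := [set J : {set 'I_n} | #|J| == k].

Lemma ksubset_tuplesE m : ksubset_tuples n m k = tuples_on ksubsets m.
Proof. by apply/setP => I; rewrite !inE; apply: eq_forallb => i; rewrite inE. Qed.

Lemma card_ksubsets : #|ksubsets| = 'C(n, k).
Proof. by rewrite card_draws card_ord. Qed.

(* complementation maps the k-sets containing A onto the (n - k)-subsets of ~: A *)
Lemma card_ksupersets (A : {set 'I_n}) : (k <= n)%N ->
  #|[set J in ksubsets | A \subset J]| = 'C(n - #|A|, n - k).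
Proof.
move=> kn.
have -> : [set J in ksubsets | A \subset J]
    = @finset.setC _ @^-1: [set J' : {set 'I_n} | J' \subset ~: A & #|J'| == (n - k)%N].
  apply/setP => J; rewrite !inE finset.setCS andbC; congr (_ && _).
  by have := cardsC J; rewrite card_ord => ?; apply/eqP/eqP; lia.
rewrite card_preimset; last exact: finset.setC_inj.
by rewrite cards_draws cardsCs card_ord finset.setCK.
Qed.

Lemma hit_prob_ksubsets (R : realType) (A : {set 'I_n}) : (#|A| <= k <= n)%N ->
  hit_prob R ksubsets (fun J => A \subset J) = (k ^_ #|A|)%:R / (n ^_ #|A|)%:R.
Proof.
move=> /andP[Ak kn]; rewrite /hit_prob card_ksupersets // card_ksubsets.
apply/eqP; rewrite eqr_div ?pnatr_eq0 -?lt0n ?bin_gt0 ?ffact_gt0 ?(leq_trans Ak) //.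
by rewrite -!natrM bin_sub_ffact ?Ak // mulnC.
Qed.

End KSubsets.

Lemma natr_card_exists_le (R : realType) (T I : finType) (D : {set T}) (B : I -> pred T) :
  #|[set x in D | [exists i, B i x]]|%:R <= \sum_i #|[set x in D | B i x]|%:R :> R.
Proof.
rewrite (natr_card_setIdE _ _ (fun x => [exists i, B i x])).
rewrite (eq_bigr _ (fun i _ => natr_card_setIdE _ _ (B i))) exchange_big /=.
apply: ler_sum => x _.
have [/existsP[i Bix]|_] := boolP [exists i, B i x]; last by rewrite sumr_ge0.
by rewrite (bigD1 i) //= Bix lerDl sumr_ge0.
Qed.

Lemma prob_tuples_ge (R : realType) n m k (E : {ffun 'I_m -> {set 'I_n}} -> Prop)
    (B : pred {ffun 'I_m -> {set 'I_n}}) (d : R) : (k <= n)%N ->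
  (forall I, I \in ksubset_tuples n m k -> ~~ B I -> E I) ->
  #|[set I in ksubset_tuples n m k | B I]|%:R <= d * #|ksubset_tuples n m k|%:R ->
  1 - d <= @prob_tuples R n m k E.
Proof.
set T := ksubset_tuples n m k => kn BE badB.
have T0 : (0 < #|T|)%N.
  by rewrite /T ksubset_tuplesE card_tuples_on expn_gt0 card_ksubsets bin_gt0 kn.
rewrite /prob_tuples -/T ler_pdivlMr ?ltr0n //.
have cardB : #|[set I in T | ~~ B I]|%:R = #|T|%:R - #|[set I in T | B I]|%:R :> R.
  apply/eqP; rewrite eq_sym subr_eq !natr_card_setIdE -sum1_card natr_sum -big_split /=.
  by apply/eqP/eq_bigr => I _; case: (B I); rewrite ?addr0 ?add0r.
have : (#|[set I in T | ~~ B I]| <= #|[set I in T | `[< E I >]]|)%N.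
  apply/subset_leq_card/fintype.subsetP => I; rewrite !inE => /andP[TI BI].
  by rewrite TI /=; apply/asboolP/BE; rewrite ?inE.
rewrite -(@ler_nat R) cardB; lra.
Qed.

Section PairConcentration.
Variables (R : realType) (n k : nat).
Hypotheses (k2 : (2 <= k)%N) (kn : (k < n)%N).

Let nk_bounds : (2 : R) <= k%:R /\ k%:R + 1 <= n%:R :> R.
Proof. by rewrite natr1 !ler_nat. Qed.

Definition gap_ratio : R := (n%:R - k%:R) / (n%:R + k%:R - 2).

Lemma gap_ratio_bounds : 0 <= gap_ratio < 1.
Proof. by have [? ?] := nk_bounds; rewrite divr_ge0 ?ltr_pdivrMr /=; lra. Qed.

Lemma hit_prob_pair (a b : 'I_n) :
  hit_prob R (ksubsets n k) (contains_pair a b)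
  = if a == b then k%:R / n%:R else k%:R * (k%:R - 1) / (n%:R * (n%:R - 1)).
Proof.
rewrite hit_prob_ksubsets ?cards2; last by case: (a != b); lia.
case: (a == b); rewrite ffactE /= !muln1 // !natrM -!subn1 !natrB //; lia.
Qed.

Variables (m : nat) (eps : R).
Hypotheses (m0 : (0 < m)%N) (eps0 : 0 < eps).

Let mean (a b : 'I_n) := hits_mean R (ksubsets n k) (contains_pair a b) m.

Definition pair_scale : R := (1 + gap_ratio) * n%:R / (m%:R * k%:R).

Lemma pair_scale_mean a b :
  pair_scale * mean a b = if a == b then 1 + gap_ratio else 1 - gap_ratio.
Proof.
have [? ?] := nk_bounds; have m0R : 0 < m%:R :> R by rewrite ltr0n.
rewrite /mean /hits_mean hit_prob_pair /pair_scale /gap_ratio.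
by case: (a == b); field; rewrite !gt_eqF //; lra.
Qed.

Lemma pair_scale_gt0 : 0 < pair_scale.
Proof.
have [? ?] := nk_bounds; have /andP[q0 _] := gap_ratio_bounds.
have m0R : 0 < m%:R :> R by rewrite ltr0n.
by rewrite !(mulr_gt0, invr_gt0) //; lra.
Qed.

Definition pair_dev (a b : 'I_n) : R := eps * gap_ratio / (pair_scale * mean a b).

Lemma pair_dev_bounds a b : (1 + eps) * gap_ratio < 1 -> 0 <= pair_dev a b < 1.
Proof.
move=> small; have /andP[q0 q1] := gap_ratio_bounds.
rewrite /pair_dev pair_scale_mean.
by case: (a == b); rewrite divr_ge0 ?(mulr_ge0 (ltW eps0) q0) ?ltr_pdivrMr /=; lra.
Qed.

Lemma pair_entry_bound a b (x : R) : `|x - mean a b| <= pair_dev a b * mean a b ->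
  `|1 - pair_scale * x| <= (1 + eps) * gap_ratio.
Proof.
move=> dev; have s0 := pair_scale_gt0; have /andP[q0 q1] := gap_ratio_bounds.
have -> : 1 - pair_scale * x = (1 - pair_scale * mean a b) + pair_scale * (mean a b - x) by ring.
apply: le_trans (ler_normD _ _) _; rewrite normrM gtr0_norm // distrC.
have t0 : 0 < pair_scale * mean a b by rewrite pair_scale_mean; case: (a == b); lra.
have -> : `|pair_scale * mean a b - 1| = gap_ratio.
  by rewrite pair_scale_mean; case: (a == b); rewrite (addrC 1) addrK ?normrN ger0_norm.
have mu0 : 0 < mean a b by rewrite -(pmulr_rgt0 _ s0).
have devE : pair_scale * (pair_dev a b * mean a b) = eps * gap_ratio.
  by rewrite /pair_dev; field; rewrite !gt_eqF.
rewrite distrC in dev; have := ler_wpM2l (ltW s0) dev; lra.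
Qed.

Lemma pair_dev_rate a b (L : R) :
  12 * n%:R * (n%:R - 1) ^+ 2 / (eps ^+ 2 * (n%:R - k%:R) ^+ 2 * k%:R) * L <= m%:R ->
  L <= mean a b * (pair_dev a b ^+ 2 / 3).
Proof.
set C := (X in X * L <= _) => hm; have [? ?] := nk_bounds.
have m0R : 0 < m%:R :> R by rewrite ltr0n.
have s0 := pair_scale_gt0; have /andP[q0 q1] := gap_ratio_bounds.
have t0 : 0 < pair_scale * mean a b by rewrite pair_scale_mean; case: (a == b); lra.
have t1 : pair_scale * mean a b <= 1 + gap_ratio by rewrite pair_scale_mean; case: (a == b); lra.
have mu0 : 0 < mean a b by rewrite -(pmulr_rgt0 _ s0).
have C0 : 0 < C by rewrite !(mulr_gt0, invr_gt0, exprn_gt0) //; lra.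
have -> : mean a b * (pair_dev a b ^+ 2 / 3)
    = m%:R / C * ((1 + gap_ratio) / (pair_scale * mean a b)).
  by rewrite /pair_dev /C /pair_scale /gap_ratio; field; rewrite !gt_eqF //; lra.
have LC : L <= m%:R / C by rewrite ler_pdivlMr // mulrC.
by apply: (le_trans LC); rewrite ler_peMr ?(divr_ge0 _ (ltW C0)) // ler_pdivlMr // mul1r.
Qed.

Definition pair_deviates (I : {ffun 'I_m -> {set 'I_n}}) (ab : 'I_n * 'I_n) : bool :=
  pair_dev ab.1 ab.2 * mean ab.1 ab.2
    < `|(hits (contains_pair ab.1 ab.2) I)%:R - mean ab.1 ab.2|.

Lemma card_deviating_tuples (delta : R) : 0 < delta -> (1 + eps) * gap_ratio < 1 ->
  12 * n%:R * (n%:R - 1) ^+ 2 / (eps ^+ 2 * (n%:R - k%:R) ^+ 2 * k%:R)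
    * ln (2 * n%:R ^+ 2 / delta) <= m%:R ->
  #|[set I in ksubset_tuples n m k | [exists ab, pair_deviates I ab]]|%:R
    <= delta * #|ksubset_tuples n m k|%:R.
Proof.
move=> delta0 small; set L := ln _ => hm; have [? ?] := nk_bounds.
(* union bound over the n^2 pairs, each deviating with probability <= 2 exp(-L) = delta / n^2 *)
have -> : delta = (n * n)%:R * (2 * expR (- L)).
  rewrite expRN lnK ?posrE ?invf_div ?natrM; first by field; rewrite gt_eqF //; lra.
  by rewrite divr_gt0 ?mulr_gt0 ?exprn_gt0 //; lra.
rewrite ksubset_tuplesE; apply: le_trans (natr_card_exists_le _ _ _) _.
have -> : (n * n)%N = #|{: 'I_n * 'I_n}| by rewrite card_prod card_ord.
rewrite -mulrA mulr_natl -sumr_const; apply: ler_sum => -[a b] _; rewrite /pair_deviates /=.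
have S0 : (0 < #|ksubsets n k|)%N by rewrite card_ksubsets bin_gt0 ltnW.
apply: le_trans (card_hits_deviation _ m (pair_dev_bounds a b small) S0) _.
by rewrite mulrAC ler_wpM2r ?ler0n // ler_wpM2l // ler_expR lerN2 pair_dev_rate.
Qed.

End PairConcentration.

Theorem theorem5 (R : realType) (n k : nat) (eps delta : R) (m : nat) :
  (2 <= k)%N -> (k <= n - 1)%N -> 0 < eps -> 0 < delta ->
  12 * n%:R * (n%:R - 1) ^+ 2 / (eps ^+ 2 * (n%:R - k%:R) ^+ 2 * k%:R)
    * ln (2 * n%:R ^+ 2 / delta) <= m%:R ->
  1 - delta <= @prob_tuples R n m k (fun I =>
     dist_bar_psd (@S_of R n m I) <= (1 + eps) * ((n%:R - k%:R) / (n%:R + k%:R - 2))).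
Proof.
move=> k2 kn1 eps0 delta0 hm; have kn : (k < n)%N by lia.
have [k2R knR] : (2 : R) <= k%:R /\ k%:R + 1 <= n%:R :> R by rewrite natr1 !ler_nat.
have /andP[q0 _] := gap_ratio_bounds R k2 kn.
have [delta1|delta1] := leP 1 delta.
  by apply: le_trans (_ : 0 <= _); rewrite ?subr_le0 // divr_ge0.
have [q1|q1] := leP 1 ((1 + eps) * gap_ratio R n k).
  apply: (@prob_tuples_ge _ _ _ _ _ pred0) => [|I _ _|]; first exact: ltnW.
    exact: le_trans (dist_bar_psd_le1 _) q1.
  by rewrite (natr_card_setIdE _ _ pred0) big1 ?mulr_ge0 ?ler0n //; lra.
have m0 : (0 < m)%N.
  rewrite -(ltr0n R); apply: lt_le_trans hm; rewrite mulr_gt0 ?ln_gt0 //.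
    by rewrite !(mulr_gt0, invr_gt0, exprn_gt0) //; lra.
  by rewrite ltr_pdivlMr // mul1r; nra.
apply: (@prob_tuples_ge _ _ _ _ _ (fun I => [exists ab, pair_deviates k eps I ab])).
- exact: ltnW.
- move=> I _; rewrite negb_exists => /forallP within.
  apply: (dist_bar_psd_S_of_le (s := pair_scale R n k m)) => [||a b].
  + exact/ltW/pair_scale_gt0.
  + by rewrite mulr_ge0 //; lra.
  + by apply: pair_entry_bound => //; rewrite leNgt; exact: within (a, b).
- exact: card_deviating_tuples.
Qed.
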